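(* Let $P\in\mathsf{AST}$. For a rational $0<\delta<1$ and a scheduler $f$, call the smallest $k\in\mathbb{N}$ satisfying $\sum_{\tau\in T_{\le k}(P,f)}\mathrm{Prob}(\tau)>\delta$ the required simulation time to cross $\delta$ for $f$. Then, for each such $\delta$, the set of required simulation times to cross $\delta$ over all schedulers $f$ has an upper bound.
   Context: pGCL. Fix a countable set $\mathrm{Var}$ of variables taking rational values. Programs are generated by $P ::= \bot \mid v:=e \mid P;P \mid P\oplus_p P \mid P\,[\!]\,P \mid \mathtt{while}(b)\{P\}$ ($v\in\mathrm{Var}$, $e,p$ arithmetical expressions, $b$ boolean expression, $\bot$ the empty program; $\oplus_p$ probabilistic choice, $[\!]$ nondeterministic choice). A valuation is $\eta:\mathrm{Var}\to\mathbb{Q}$. A scheduler is a total function $f:\{L_n,R_n,L_p,R_p\}^*\to\{L_n,R_n\}$; $\mathbb{F}$ is the set of schedulers. An execution state is $(P,\eta,a,w)$ with $a\in\mathbb{Q}\cap(0,1]$, $w\in\{L_n,R_n,L_p,R_p\}^*$; states with program $\bot$ are terminal. For $f\in\mathbb{F}$, $\to_f$ is the smallest relation with: $(v:=e,\eta,a,w)\to_f(\bot,\eta[v\mapsto[\![e]\!]_\eta],a,w)$; if $(P_1,\eta,a,w)\to_f(P_1',\eta',a',w')$ then $(P_1;P_2,\eta,a,w)\to_f(P_1';P_2,\eta',a',w')$; $(\bot;P_2,\eta,a,w)\to_f(P_2,\eta,a,w)$; $(P_1\oplus_pP_2,\eta,a,w)\to_f(P_2,\eta,a,wR_p)$ if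 $[\![p]\!]_\eta\le0$, $\to_f(P_1,\eta,a,wL_p)$ if $[\![p]\!]_\eta\ge1$, and if $0<[\![p]\!]_\eta<1$ both $\to_f(P_1,\eta,a[\![p]\!]_\eta,wL_p)$ and $\to_f(P_2,\eta,a(1-[\![p]\!]_\eta),wR_p)$; $(P_1[\!]P_2,\eta,a,w)\to_f(P_1,\eta,a,wL_n)$ if $f(w)=L_n$, $\to_f(P_2,\eta,a,wR_n)$ if $f(w)=R_n$; $(\mathtt{while}(b)\{P\},\eta,a,w)\to_f(P;\mathtt{while}(b)\{P\},\eta,a,w)$ if $b$ holds, else $\to_f(\bot,\eta,a,w)$. $\to_f^n$ ($n\ge1$) is the $n$-fold composition, $\to_f^*=\bigcup_{n\ge1}\to_f^n$. The initial execution state of $P$ is $(P,\eta_0,1,\varepsilon)$, $\eta_0\equiv0$. $\mathrm{Prob}((P,\eta,a,w))=a$. $T_{\le k}(P,f)$ is the set of terminal execution states $\tau$ with $(P,\eta_0,1,\varepsilon)\to_f^n\tau$ for some $n\le k$. $\Pr_{\mathrm{term}}(P,f)=\sum\mathrm{Prob}(\tau)$ over all terminal $\tau$ with $(P,\eta_0,1,\varepsilon)\to_f^*\tau$. $\mathsf{AST}$ is the set of programs $P$ with $\Pr_{\mathrm{term}}(P,f)=1$ for every scheduler $f$. *)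

From HB Require Import structures.
From mathcomp Require Import all_boot all_order all_algebra.
From mathcomp Require Import all_classical all_reals.
From mathcomp Require Import ereal esum.
From mathcomp Require Import Rstruct.
Set Implicit Arguments. Unset Strict Implicit. Unset Printing Implicit Defensive.
Import Order.TTheory GRing.Theory Num.Theory.
Local Open Scope ring_scope.
Local Open Scope classical_set_scope.

Definition var := nat.
Definition valuation := var -> rat.
Definition eta0 : valuation := fun _ => 0.
Definition upd (eta : valuation) (v : var) (q : rat) : valuation :=
  fun x => if x == v then q else eta x.

Inductive aexp : Type :=
| AConst of rat
| AVar of var
| AAdd of aexp & aexp
| ASub of aexp & aexp
| AMul of aexp & aexp.

Fixpoint aeval (eta : valuation) (e : aexp) : rat :=
  match e with
  | AConst q => q
  | AVar v => eta v
  | AAdd e1 e2 => aeval eta e1 + aeval eta e2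
  | ASub e1 e2 => aeval eta e1 - aeval eta e2
  | AMul e1 e2 => aeval eta e1 * aeval eta e2
  end.

Inductive bexp : Type :=
| BTrue | BFalse
| BLe of aexp & aexp
| BLt of aexp & aexp
| BEq of aexp & aexp
| BNot of bexp
| BAnd of bexp & bexp
| BOr of bexp & bexp.

Fixpoint beval (eta : valuation) (b : bexp) : bool :=
  match b with
  | BTrue => true
  | BFalse => false
  | BLe e1 e2 => aeval eta e1 <= aeval eta e2
  | BLt e1 e2 => aeval eta e1 < aeval eta e2
  | BEq e1 e2 => aeval eta e1 == aeval eta e2
  | BNot b => ~~ beval eta b
  | BAnd b1 b2 => beval eta b1 && beval eta b2
  | BOr b1 b2 => beval eta b1 || beval eta b2
  end.

Inductive prog : Type :=
| PBot
| PAssign of var & aexp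
| PSeq of prog & prog
| PProb of aexp & prog & prog
| PNondet of prog & prog
| PWhile of bexp & prog.

Inductive letter : Type := Ln | Rn | Lp | Rp.
Definition history := seq letter.

Inductive ndir : Type := NL | NR.
Definition scheduler := history -> ndir.

Record state : Type := St {
  st_prog : prog; st_val : valuation; st_prob : rat; st_hist : history }.

Definition terminal (s : state) : Prop := st_prog s = PBot.
Definition Prob (s : state) : rat := st_prob s.

Inductive step (f : scheduler) : state -> state -> Prop :=
| step_assign v e eta a w :
    step f (St (PAssign v e) eta a w) (St PBot (upd eta v (aeval eta e)) a w)
| step_seq P1 P2 eta a w P1' eta' a' w' :
    step f (St P1 eta a w) (St P1' eta' a' w') ->
    step f (St (PSeq P1 P2) eta a w) (St (PSeq P1' P2) eta' a' w')
| step_seq_bot P2 eta a w :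
    step f (St (PSeq PBot P2) eta a w) (St P2 eta a w)
| step_prob_le0 p P1 P2 eta a w :
    aeval eta p <= 0 ->
    step f (St (PProb p P1 P2) eta a w) (St P2 eta a (rcons w Rp))
| step_prob_ge1 p P1 P2 eta a w :
    1 <= aeval eta p ->
    step f (St (PProb p P1 P2) eta a w) (St P1 eta a (rcons w Lp))
| step_prob_L p P1 P2 eta a w :
    0 < aeval eta p < 1 ->
    step f (St (PProb p P1 P2) eta a w)
           (St P1 eta (a * aeval eta p) (rcons w Lp))
| step_prob_R p P1 P2 eta a w :
    0 < aeval eta p < 1 ->
    step f (St (PProb p P1 P2) eta a w)
           (St P2 eta (a * (1 - aeval eta p)) (rcons w Rp))
| step_nd_L P1 P2 eta a w :
    f w = NL ->
    step f (St (PNondet P1 P2) eta a w) (St P1 eta a (rcons w Ln))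
| step_nd_R P1 P2 eta a w :
    f w = NR ->
    step f (St (PNondet P1 P2) eta a w) (St P2 eta a (rcons w Rn))
| step_while_t b P eta a w :
    beval eta b ->
    step f (St (PWhile b P) eta a w) (St (PSeq P (PWhile b P)) eta a w)
| step_while_f b P eta a w :
    ~~ beval eta b ->
    step f (St (PWhile b P) eta a w) (St PBot eta a w).

Inductive nsteps (f : scheduler) : nat -> state -> state -> Prop :=
| nsteps1 s t : step f s t -> nsteps f 1 s t
| nstepsS n s u t : step f s u -> nsteps f n u t -> nsteps f n.+1 s t.

Definition init (P : prog) : state := St P eta0 1 [::].

Definition T_le (k : nat) (P : prog) (f : scheduler) : set {classic state} :=
  [set t | terminal t /\ exists2 n, (1 <= n <= k)%N & nsteps f n (init P) t].

Definition T_all (P : prog) (f : scheduler) : set {classic state} :=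
  [set t | terminal t /\ exists2 n, (1 <= n)%N & nsteps f n (init P) t].

Definition sumProb (S : set {classic state}) : \bar Rdefinitions.R :=
  (\esum_(t in S) ((ratr (Prob t) : Rdefinitions.R)%:E))%E.

Definition Pr_term (P : prog) (f : scheduler) : \bar Rdefinitions.R :=
  sumProb (T_all P f).

Definition AST (P : prog) : Prop := forall f : scheduler, Pr_term P f = 1%E.

Definition req_time (P : prog) (delta : rat) (f : scheduler) (k : nat) : Prop :=
  ((ratr delta : Rdefinitions.R)%:E < sumProb (T_le k P f))%E /\
  forall j : nat, (j < k)%N ->
    ~ ((ratr delta : Rdefinitions.R)%:E < sumProb (T_le j P f))%E.

From HB Require Import structures.
From mathcomp Require Import all_boot all_order all_algebra.
From mathcomp Require Import all_classical all_reals.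
From mathcomp Require Import ereal esum.
From mathcomp Require Import Rstruct.
Set Implicit Arguments. Unset Strict Implicit. Unset Printing Implicit Defensive.
Import Order.TTheory GRing.Theory Num.Theory.
Local Open Scope classical_set_scope.

(* Each step extends the history by at most one letter, so the set T_{<=n}(P,f)
   only depends on the values of f on histories of length < n.  If no single n
   worked for every scheduler, the sets of schedulers f with
   sum_{T_{<=n}(P,f)} Prob <= delta would form a decreasing chain of nonempty
   sets, each determined by finitely many values of f.  By compactness of the
   scheduler space {L_n,R_n}^histories (Koenig's lemma), some f lies in all of
   them, and then Pr_term(P,f) <= delta < 1 contradicts P \in AST. *)

Lemma pickle_bounded_finite (T : countType) (A : set T) :
  finite_set A -> exists b, forall x, A x -> (pickle x < b)%N.
Proof.
move=> /finite_seqP[s ->]; exists (\max_(x <- s) pickle x).+1 => x xs.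
by rewrite ltnS; exact: (@leq_bigmax_seq _ s predT pickle x xs).
Qed.

Section FinitaryChainCompactness.
Variables (T : countType) (D : finType) (d0 : D).
Variable Q : nat -> (T -> D) -> Prop.
Hypothesis Q_antitone : forall m n f, (m <= n)%N -> Q n f -> Q m f.
Hypothesis Q_finitary : forall n, exists2 A : set T, finite_set A &
  forall f g, (forall x, A x -> f x = g x) -> Q n f -> Q n g.
Hypothesis Q_sat : forall n, exists f, Q n f.

Definition agree_below k (f g : T -> D) :=
  forall x, (pickle x < k)%N -> f x = g x.

Definition extendable k (g : T -> D) :=
  forall n, exists2 f, agree_below k f g & Q n f.

Definition set_at k (g : T -> D) d : T -> D :=
  fun x => if pickle x == k then d else g x.

Fixpoint approx k : T -> D :=
  if k is k'.+1 then
    let g := approx k' in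
    set_at k' g (odflt d0 [pick d | `[< extendable k (set_at k' g d) >] ])
  else fun=> d0.

Lemma extendable_set_at k g :
  extendable k g -> exists d, extendable k.+1 (set_at k g d).
Proof.
move=> g_ext; apply: contrapT => /forallNP no_ext.
have /choice[n n_fails] : forall d, exists n,
    ~ exists2 f, agree_below k.+1 f (set_at k g d) & Q n f.
  by move=> d; apply/existsNP/no_ext.
have [f fg QNf] := g_ext (\max_d n d).
(* [k] need not be the code of any element, in which case any [d] will do. *)
pose d := if pickle_inv k is Some x then f x else d0.
apply: (n_fails d); exists f; last exact: Q_antitone (leq_bigmax d) QNf.
move=> x; rewrite ltnS leq_eqVlt /set_at => /predU1P[xk|xk].
  by rewrite xk eqxx /d -xk pickleK_inv.
by rewrite (ltn_eqF xk) fg.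
Qed.

Lemma extendable_approx k : extendable k (approx k).
Proof.
elim: k => [n|k IH] /=; first by have [f Qf] := Q_sat n; exists f.
case: pickP => [d /asboolP //|no_d].
have [d /asboolP] := extendable_set_at IH.
by rewrite no_d.
Qed.

Lemma approx_stable j x : (pickle x < j)%N -> approx j x = approx (pickle x).+1 x.
Proof.
elim: j => // j IH; rewrite ltnS leq_eqVlt => /predU1P[<- //|xj].
by rewrite -IH //= /set_at (ltn_eqF xj).
Qed.

Theorem compact_finitary_chain : exists f, forall n, Q n f.
Proof.
exists (fun x => approx (pickle x).+1 x) => n.
have [A /pickle_bounded_finite[b Ab] A_local] := Q_finitary n.
have [f fb Qf] := extendable_approx b n.
by apply: A_local Qf => x Ax; rewrite fb ?Ab // approx_stable ?Ab.
Qed.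

End FinitaryChainCompactness.

Definition bool_of_ndir (d : ndir) : bool := if d is NL then true else false.
Definition ndir_of_bool (b : bool) : ndir := if b then NL else NR.
Lemma bool_of_ndirK : cancel bool_of_ndir ndir_of_bool. Proof. by case. Qed.
HB.instance Definition _ := Finite.copy ndir (can_type bool_of_ndirK).

Definition pair_of_letter (x : letter) : bool * bool :=
  match x with
  | Ln => (false, false) | Rn => (false, true)
  | Lp => (true, false) | Rp => (true, true)
  end.
Definition letter_of_pair (p : bool * bool) : letter :=
  match p with
  | (false, false) => Ln | (false, true) => Rn
  | (true, false) => Lp | (true, true) => Rp
  end.
Lemma pair_of_letterK : cancel pair_of_letter letter_of_pair. Proof. by case. Qed.
HB.instance Definition _ := Finite.copy letter (can_type pair_of_letterK).

Lemma finite_short_histories n : finite_set [set w : history | (size w < n)%N].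
Proof.
elim: n => [|n IH]; first exact: sub_finite_set (finite_set0 _).
pose longer :=
  [set x :: w | x in [set: letter] & w in [set w : history | (size w < n)%N]].
apply: (@sub_finite_set _ _ ([set [::]] `|` longer)).
  case=> [|x w] /=; first by left.
  by rewrite ltnS => wn; right; exists x => //; exists w.
by rewrite finite_setU; split; [exact: finite_set1 | exact: finite_image2].
Qed.

Lemma size_hist_step f s t :
  step f s t -> (size (st_hist t) <= (size (st_hist s)).+1)%N.
Proof. by elim=> //= *; rewrite ?size_rcons. Qed.

Lemma eq_sched_step f g s t :
  f (st_hist s) = g (st_hist s) -> step f s t -> step g s t.
Proof.
move=> fg st; elim: st fg => /= *; constructor; by [auto | congruence].
Qed.

Lemma eq_sched_nsteps f g n s t :
  (forall w, (size w < size (st_hist s) + n)%N -> f w = g w) ->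
  nsteps f n s t -> nsteps g n s t.
Proof.
move=> fg st; elim: st fg => {n s t} [s t st|n s u t st _ IH] fg.
  by apply/nsteps1/(eq_sched_step _ st)/fg; rewrite addn1.
apply: (nstepsS (eq_sched_step _ st)).
  by apply: fg; rewrite addnS ltnS leq_addr.
apply: IH => w wu; apply: fg; apply: (leq_trans wu).
by rewrite addnS -addSn leq_add2r (size_hist_step st).
Qed.

Lemma eq_sched_T_le n P f g :
  (forall w, (size w < n)%N -> f w = g w) -> T_le n P f = T_le n P g.
Proof.
move=> fg; apply/seteqP; split=> t [tt [m mn mt]]; split=> //; exists m => //;
  apply: eq_sched_nsteps mt => w /= wm; [|symmetry]; apply: fg;
  by apply: (leq_trans wm); case/andP: mn.
Qed.

Lemma subset_T_le m n P f : (m <= n)%N -> T_le m P f `<=` T_le n P f.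
Proof.
move=> mn t [tt [k /andP[k1 km] kt]]; split=> //; exists k => //.
by rewrite k1 (leq_trans km mn).
Qed.

Lemma le_sumProb (S S' : set {classic state}) :
  S `<=` S' -> (sumProb S <= sumProb S')%E.
Proof.
move=> SS'; apply: ereal_sup_le => _ [A [fA AS] <-].
by exists A => //; split => //; apply: subset_trans SS'.
Qed.

Lemma finite_subset_T_le P f (A : set {classic state}) :
  finite_set A -> A `<=` T_all P f -> exists N, A `<=` T_le N P f.
Proof.
move=> /finite_seqP[s ->] {A}; elim: s => [|t s IH] s_all; first by exists 0%N.
have [N sN] : exists N, [set` s] `<=` T_le N P f.
  by apply: IH => u us; apply: s_all; rewrite /= inE us orbT.
have [tt [m m1 mt]] := s_all t (mem_head t s).
exists (maxn N m) => u /= /predU1P[->|us].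
  by split=> //; exists m => //; rewrite m1 leq_maxr.
exact: subset_T_le (leq_maxl N m) u (sN u us).
Qed.

Lemma Pr_term_le P f (x : \bar Rdefinitions.R) :
  (forall n, sumProb (T_le n P f) <= x)%E -> (Pr_term P f <= x)%E.
Proof.
move=> ub; apply: ge_ereal_sup => _ [A [fA A_all] <-].
have [N AN] := finite_subset_T_le fA A_all.
apply: le_trans (ub N); apply: ereal_sup_ubound; by exists A.
Qed.

Lemma AST_uniform_crossing P (d : Rdefinitions.R) : AST P -> (d < 1)%R ->
  exists N, forall f, (d%:E < sumProb (T_le N P f))%E.
Proof.
move=> ast d1; apply: contrapT => /forallNP no_N.
have [f f_below] : exists f, forall n, (sumProb (T_le n P f) <= d%:E)%E.
  apply: (compact_finitary_chain NL
    (Q := fun n f => sumProb (T_le n P f) <= d%:E)%E).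
  - move=> m n f mn; apply: le_trans; exact/le_sumProb/subset_T_le.
  - move=> n; exists [set w : history | (size w < n)%N].
      exact: finite_short_histories.
    by move=> f g fg; rewrite (eq_sched_T_le P fg).
  - move=> n; have /existsNP[f /negP] := no_N n; rewrite -leNgt => below.
    by exists f.
have := Pr_term_le f_below; rewrite (ast f) lee_fin => /(lt_le_trans d1).
by rewrite ltxx.
Qed.

Theorem lemmaB3 (P : prog) (hP : AST P) (delta : rat)
  (hd0 : (0 < delta)%R) (hd1 : (delta < 1)%R) :
  exists B : nat, forall (f : scheduler) (k : nat),
    req_time P delta f k -> (k <= B)%N.
Proof.
have delta1 : (ratr delta < 1 :> Rdefinitions.R)%R.
  by rewrite -(rmorph1 ratr) ltr_rat.
have [N crossN] := AST_uniform_crossing hP delta1.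
exists N => f k [_ not_before]; rewrite leqNgt; apply/negP => Nk.
exact: not_before N Nk (crossN f).
Qed.
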